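(* Let $\mathcal{X}=(\mathbf{x}_n)_{n=1}^\infty$ be a spreading sequence in a quasi-Banach space $\mathbb{X}$. If $\mathcal{X}$ is linearly dependent, then it is constant.
   Context: For a sequence $(\mathbf{x}_n)$ in $\mathbb{X}$, $\mathcal{N}\subseteq\mathbb{N}$ and an injective $\psi\colon\mathcal{N}\to\mathbb{N}$, $\psi$ is a translation if the assignment $\mathbf{x}_n\mapsto\mathbf{x}_{\psi(n)}$, $n\in\mathcal{N}$, defines a linear map on $\operatorname{span}(\mathbf{x}_n\colon n\in\mathcal{N})$ extending to an isomorphism $T_\psi$ from the closed linear span of $\{\mathbf{x}_n\colon n\in\mathcal{N}\}$ onto the closed linear span of $\{\mathbf{x}_n\colon n\in\psi(\mathcal{N})\}$. The sequence is spreading if every increasing map $\psi\colon\mathbb{N}\to\mathbb{N}$ is a translation. *)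

From HB Require Import structures.
From mathcomp Require Import all_boot all_order all_algebra.
Set Implicit Arguments. Unset Strict Implicit. Unset Printing Implicit Defensive.
Import Order.TTheory GRing.Theory Num.Theory.
Local Open Scope ring_scope.

(* Scalars: K : numFieldType (covers R and C).  Quasi-norm qn : V -> K
   taking nonnegative (hence real) values. *)

Section QB.
Variables (K : numFieldType) (V : lmodType K).

Definition quasi_norm (qn : V -> K) : Prop :=
  [/\ (forall x, 0 <= qn x),
      (forall x, qn x = 0 -> x = 0),
      (forall (a : K) x, qn (a *: x) = `|a| * qn x) &
      (exists kappa : K, 1 <= kappa /\
         forall x y, qn (x + y) <= kappa * (qn x + qn y))].

Definition qn_cauchy (qn : V -> K) (u : nat -> V) : Prop :=
  forall e : K, 0 < e -> exists N, forall m n, (N <= m)%N -> (N <= n)%N ->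
    qn (u m - u n) < e.

Definition qn_converges (qn : V -> K) (u : nat -> V) (l : V) : Prop :=
  forall e : K, 0 < e -> exists N, forall n, (N <= n)%N -> qn (u n - l) < e.

Definition quasi_banach (qn : V -> K) : Prop :=
  quasi_norm qn /\
  forall u, qn_cauchy qn u -> exists l, qn_converges qn u l.

Definition lspan (X : nat -> V) (S : nat -> Prop) : V -> Prop :=
  fun v => exists (N : nat) (a : nat -> K) (idx : nat -> nat),
    (forall i, (i < N)%N -> S (idx i)) /\
    v = \sum_(i < N) a i *: X (idx i).

Definition closed_lspan (qn : V -> K) (X : nat -> V) (S : nat -> Prop)
  : V -> Prop :=
  fun v => forall e : K, 0 < e -> exists y, lspan X S y /\ qn (v - y) < e.

Definition translation (qn : V -> K) (X : nat -> V) (Nset : nat -> Prop)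
  (psi : nat -> nat) : Prop :=
  (forall m n, Nset m -> Nset n -> psi m = psi n -> m = n) /\
  let A := closed_lspan qn X Nset in
  let B := closed_lspan qn X (fun k => exists n, Nset n /\ psi n = k) in
  exists T : V -> V,
    (forall (a b : K) x y, A x -> A y -> T (a *: x + b *: y) = a *: T x + b *: T y) /\
    (forall n, Nset n -> T (X n) = X (psi n)) /\
    (forall y, B y <-> exists x, A x /\ T x = y) /\
    (exists C : K, 0 < C /\ forall x, A x ->
        qn (T x) <= C * qn x /\ qn x <= C * qn (T x)).

Definition spreading (qn : V -> K) (X : nat -> V) : Prop :=
  forall psi : nat -> nat, (forall m n, (m < n)%N -> (psi m < psi n)%N) ->
    translation qn X (fun _ => True) psi.

Definition linearly_dependent (X : nat -> V) : Prop :=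
  exists (N : nat) (a : nat -> K),
    (exists i, (i < N)%N /\ a i != 0) /\ \sum_(i < N) a i *: X i = 0.

Definition constant_seq (X : nat -> V) : Prop := forall m n, X m = X n.

End QB.

From HB Require Import structures.
From mathcomp Require Import all_boot all_order all_algebra zify.
Set Implicit Arguments. Unset Strict Implicit. Unset Printing Implicit Defensive.
Import Order.TTheory GRing.Theory Num.Theory.
Local Open Scope ring_scope.

(* Take a dependence relation sum_(i <= j) a_i x_i = 0 whose last coefficient
   a_j is nonzero.  The increasing map fixing every i < j and sending j to
   m >= j is a translation, and translations preserve linear relations; so
   sum_(i < j) a_i x_i + a_j x_m = 0 as well, whence x_m = x_j for all m >= j.
   Finally the translation n |-> n + j is injective on the x_n, because it is
   an isomorphism, and it sends every x_n to x_j. *)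

Section LinearRelations.
Variables (R : pzRingType) (V : lmodType R) (X : nat -> V).

Lemma linear_relation_last_nonzero (N : nat) (a : nat -> R) :
  (exists i, (i < N)%N /\ a i != 0) -> \sum_(i < N) a i *: X i = 0 ->
  exists j (b : nat -> R), b j != 0 /\ \sum_(i < j.+1) b i *: X i = 0.
Proof.
elim: N => [|N IHN] [i [ltiN ai_neq0]] rel; first by [].
have [aN_eq0 | aN_neq0] := eqVneq (a N) 0; last by exists N, a.
apply: IHN; last by rewrite big_ord_recr /= aN_eq0 scale0r addr0 in rel.
exists i; split=> //; rewrite ltn_neqAle -ltnS ltiN andbT.
by apply: contra_neq ai_neq0 => ->.
Qed.

End LinearRelations.

Section Translations.
Variables (K : numFieldType) (V : lmodType K) (qn : V -> K) (X : nat -> V).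
Hypothesis qnQ : quasi_norm qn.

Local Notation span := (closed_lspan qn X (fun _ => True)).

Lemma quasi_norm0 : qn 0 = 0.
Proof. by case: qnQ => _ _ qnZ _; rewrite -(scale0r 0) qnZ normr0 mul0r. Qed.

Lemma quasi_norm_le0 x : qn x <= 0 -> x = 0.
Proof.
case: qnQ => qn_ge0 qn_def _ _ le0.
by apply: qn_def; apply/eqP; rewrite eq_le le0 qn_ge0.
Qed.

Lemma closed_lspan_sum (a : nat -> K) (f : nat -> nat) (n : nat) :
  span (\sum_(i < n) a i *: X (f i)).
Proof.
move=> e e_gt0; exists (\sum_(i < n) a i *: X (f i)).
by rewrite subrr quasi_norm0; split=> //; exists n, a, f.
Qed.

Lemma closed_lspan_X (k : nat) : span (X k).
Proof.
have := closed_lspan_sum (fun _ => 1) (fun _ => k) 1.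
by rewrite big_ord1 scale1r.
Qed.

Lemma linear_on_span_sum (T : V -> V) :
  (forall (a b : K) x y, span x -> span y -> T (a *: x + b *: y) = a *: T x + b *: T y) ->
  forall (a : nat -> K) (f : nat -> nat) (n : nat),
    T (\sum_(i < n) a i *: X (f i)) = \sum_(i < n) a i *: T (X (f i)).
Proof.
move=> T_lin a f; elim=> [|n IHn].
  have span0 : span 0 by have := closed_lspan_sum a f 0; rewrite big_ord0.
  by have := T_lin 0 0 _ _ span0 span0; rewrite !big_ord0 !scale0r !addr0.
rewrite !big_ord_recr /= -IHn -[X in T (X + _)]scale1r.
by rewrite T_lin ?scale1r //; [exact: closed_lspan_sum | exact: closed_lspan_X].
Qed.

Variable psi : nat -> nat.
Hypothesis psiT : translation qn X (fun _ => True) psi.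

Lemma translation_relation (N : nat) (a : nat -> K) :
  \sum_(i < N) a i *: X i = 0 -> \sum_(i < N) a i *: X (psi i) = 0.
Proof.
case: psiT => _ [T [T_lin [T_X _]]] rel.
have T0 : T 0 = 0 by have := linear_on_span_sum T_lin a id 0; rewrite !big_ord0.
transitivity (T (\sum_(i < N) a i *: X i)); last by rewrite rel T0.
by rewrite (linear_on_span_sum T_lin a id); apply: eq_bigr => i _; rewrite T_X.
Qed.

Lemma translation_inj (n m : nat) : X (psi n) = X (psi m) -> X n = X m.
Proof.
case: psiT => _ [T [T_lin [T_X [_ [C [_ T_bounded]]]]]] eq_psi.
pose a i : K := if i == 0%N then 1 else -1.
pose f i := if i == 0%N then n else m.
have sum_diff : \sum_(i < 2) a i *: X (f i) = X n - X m.
  by rewrite big_ord_recr big_ord1 /= scale1r scaleN1r.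
have T_diff : T (X n - X m) = 0.
  rewrite -sum_diff linear_on_span_sum // big_ord_recr big_ord1 /=.
  by rewrite scale1r scaleN1r !T_X // eq_psi subrr.
have span_diff : span (X n - X m) by rewrite -sum_diff; exact: closed_lspan_sum.
apply/eqP; rewrite -subr_eq0; apply/eqP/quasi_norm_le0.
apply: le_trans (T_bounded _ span_diff).2 _.
by rewrite T_diff quasi_norm0 mulr0.
Qed.

End Translations.

Definition shift_tail (j m i : nat) : nat := if (i < j)%N then i else (i - j + m)%N.

Lemma shift_tail_increasing (j m : nat) :
  (j <= m)%N -> {homo shift_tail j m : x y / (x < y)%N}.
Proof. by move=> le_jm x y lt_xy; rewrite /shift_tail; case: ifP; case: ifP; lia. Qed.

Lemma spreading_constant_tail (K : numFieldType) (V : lmodType K) (qn : V -> K)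
    (X : nat -> V) (j : nat) (a : nat -> K) :
  quasi_norm qn -> spreading qn X ->
  a j != 0 -> \sum_(i < j.+1) a i *: X i = 0 ->
  forall m, (j <= m)%N -> X m = X j.
Proof.
move=> qnQ spreadX aj_neq0 rel m le_jm.
have := translation_relation qnQ (spreadX _ (shift_tail_increasing le_jm)) rel.
have fix_head : \sum_(i < j) a i *: X (shift_tail j m i) = \sum_(i < j) a i *: X i.
  by apply: eq_bigr => i _; rewrite /shift_tail ltn_ord.
move: rel; rewrite !big_ord_recr /= fix_head /shift_tail ltnn subnn add0n => rel_j rel_m.
apply: (scalerI aj_neq0); apply: (@addrI _ (\sum_(i < j) a i *: X i)).
by rewrite rel_m rel_j.
Qed.

Theorem lemma2p2 (K : numFieldType) (V : lmodType K) (qn : V -> K)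
  (X : nat -> V) :
  quasi_banach qn -> spreading qn X -> linearly_dependent X -> constant_seq X.
Proof.
move=> [qnQ _] spreadX [N [a [a_nz rel]]] n m.
have [j [b [bj_neq0 rel_j]]] := linear_relation_last_nonzero a_nz rel.
have X_tail := spreading_constant_tail qnQ spreadX bj_neq0 rel_j.
have shift_increasing : {homo addn^~ j : x y / (x < y)%N}.
  by move=> x y; rewrite ltn_add2r.
apply: (translation_inj qnQ (spreadX _ shift_increasing)).
by rewrite !X_tail ?leq_addl.
Qed.
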